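(* Let $c,d\in\mathbb{R}^n$ be distinct nonzero vectors with $c^Td\le0$. Then $\gamma[c,d]\le\tfrac12$. If in addition $0\notin[c,d]$, then $\gamma[c,d]>0$.
   Context: For distinct vectors $c,d\in\mathbb{R}^n$, $\gamma[c,d]=\frac{\sqrt{\|c\|^2\|d\|^2-(c^Td)^2}}{\|c-d\|^2}$, and $[c,d]$ denotes the closed line segment between $c$ and $d$. *)

From HB Require Import structures.
From mathcomp Require Import all_boot all_order all_algebra.
From mathcomp Require Import reals.
Set Implicit Arguments. Unset Strict Implicit. Unset Printing Implicit Defensive.
Import Order.TTheory GRing.Theory Num.Theory.
Local Open Scope ring_scope.

Definition dotv (R : realType) (n : nat) (c d : 'cV[R]_n) : R :=
  \sum_(i < n) c i 0 * d i 0.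

Definition nrm2 (R : realType) (n : nat) (c : 'cV[R]_n) : R := dotv c c.

Definition gammacd (R : realType) (n : nat) (c d : 'cV[R]_n) : R :=
  Num.sqrt (nrm2 c * nrm2 d - (dotv c d) ^+ 2) / nrm2 (c - d).

Definition in_segment (R : realType) (n : nat) (x c d : 'cV[R]_n) : Prop :=
  exists t : R, 0 <= t /\ t <= 1 /\ x = (1 - t) *: c + t *: d.

From HB Require Import structures.
From mathcomp Require Import all_boot all_order all_algebra.
From mathcomp Require Import reals ring lra.
Set Implicit Arguments. Unset Strict Implicit. Unset Printing Implicit Defensive.
Import Order.TTheory GRing.Theory Num.Theory.
Local Open Scope ring_scope.

(* With a = |c|^2, b = |d|^2 and p = c^T d, the Lagrange identity
   |a d - p c|^2 = a (a b - p^2) turns gamma[c,d] into sqrt(a b - p^2) / (a + b - 2 p).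
   For p <= 0 the bound 4 (a b - p^2) <= 4 a b <= (a + b)^2 <= (a + b - 2 p)^2 gives
   gamma <= 1/2.  If gamma = 0 then a d = p c, i.e. (-p) c + a d = 0 with -p, a >= 0,
   which exhibits 0 as a point of [c,d]. *)

Section InnerProduct.
Variables (R : realType) (n : nat).
Implicit Types (x y z : 'cV[R]_n) (k : R).

Lemma dotvC x y : dotv x y = dotv y x.
Proof. by apply: eq_bigr => i _; rewrite mulrC. Qed.

Lemma dotvDl x y z : dotv (x + y) z = dotv x z + dotv y z.
Proof. by rewrite /dotv -big_split; apply: eq_bigr => i _; rewrite !mxE mulrDl. Qed.

Lemma dotvZl k x y : dotv (k *: x) y = k * dotv x y.
Proof. by rewrite /dotv mulr_sumr; apply: eq_bigr => i _; rewrite !mxE mulrA. Qed.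

Lemma dotvNl x y : dotv (- x) y = - dotv x y.
Proof. by rewrite -scaleN1r dotvZl mulN1r. Qed.

Lemma dotvDr x y z : dotv x (y + z) = dotv x y + dotv x z.
Proof. by rewrite dotvC dotvDl !(dotvC x). Qed.

Lemma dotvZr k x y : dotv x (k *: y) = k * dotv x y.
Proof. by rewrite dotvC dotvZl dotvC. Qed.

Lemma dotvNr x y : dotv x (- y) = - dotv x y.
Proof. by rewrite dotvC dotvNl dotvC. Qed.

Lemma dotv0l y : dotv 0 y = 0.
Proof. by rewrite -(scale0r (0 : 'cV[R]_n)) dotvZl mul0r. Qed.

Definition dotvE := (dotvDl, dotvDr, dotvZl, dotvZr, dotvNl, dotvNr).

Lemma nrm2_ge0 x : 0 <= nrm2 x.
Proof. by apply: sumr_ge0 => i _; rewrite -expr2 sqr_ge0. Qed.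

Lemma nrm2_eq0 x : (nrm2 x == 0) = (x == 0).
Proof.
apply/idP/idP => [|/eqP->]; last by rewrite /nrm2 dotv0l.
rewrite psumr_eq0 => [/allP x0|i _]; last by rewrite -expr2 sqr_ge0.
apply/eqP/matrixP => i j; rewrite (ord1 j) mxE.
by have /= := x0 i (mem_index_enum _); rewrite mulf_eq0 orbb => /eqP.
Qed.

Lemma nrm2_gt0 x : x != 0 -> 0 < nrm2 x.
Proof. by rewrite lt0r nrm2_ge0 nrm2_eq0 andbT. Qed.

Lemma nrm2B x y : nrm2 (x - y) = nrm2 x + nrm2 y - 2 * dotv x y.
Proof. by rewrite /nrm2 !dotvE (dotvC y x); ring. Qed.

Lemma nrm2_lagrange x y :
  nrm2 (nrm2 x *: y - dotv x y *: x) = nrm2 x * (nrm2 x * nrm2 y - dotv x y ^+ 2).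
Proof. by rewrite {1}/nrm2 !dotvE (dotvC y x) -/(nrm2 x) -/(nrm2 y); ring. Qed.

Lemma cauchy_schwarz x y : dotv x y ^+ 2 <= nrm2 x * nrm2 y.
Proof.
have [->|x0] := eqVneq x 0.
  by rewrite /nrm2 !dotv0l expr0n mul0r.
rewrite -subr_ge0 -(pmulr_rge0 _ (nrm2_gt0 x0)) -nrm2_lagrange; exact: nrm2_ge0.
Qed.

Lemma cauchy_schwarz_eq x y :
  nrm2 x * nrm2 y = dotv x y ^+ 2 -> nrm2 x *: y = dotv x y *: x.
Proof.
move=> eq_xy; apply/eqP; rewrite -subr_eq0 -nrm2_eq0 nrm2_lagrange eq_xy.
by rewrite subrr mulr0.
Qed.

End InnerProduct.

Lemma in_segment0_comb (R : realType) (n : nat) (c d : 'cV[R]_n) (s t : R) :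
  0 <= s -> 0 <= t -> 0 < s + t -> s *: c + t *: d = 0 -> in_segment 0 c d.
Proof.
move=> s0 t0 st0 comb0; have st_neq0 : s + t != 0 by rewrite gt_eqF.
exists (t / (s + t)); split; first by rewrite divr_ge0 // ltW.
split; first by rewrite ler_pdivrMr // mul1r lerDr.
have -> : 1 - t / (s + t) = s / (s + t) by apply: (mulIf st_neq0); field.
by rewrite ![_ / (s + t)]mulrC -!scalerA -scalerDr comb0 scaler0.
Qed.

Lemma gram_le_quarter_sqr (R : realFieldType) (a b p : R) :
  0 <= a -> 0 <= b -> p <= 0 -> a * b - p ^+ 2 <= ((a + b - 2 * p) / 2) ^+ 2.
Proof.
move=> a0 b0 p0; have amgm := sqr_ge0 (a - b).
have cross_ge0 : 0 <= - p * (a + b) by nra.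
rewrite !expr2 in amgm *; nra.
Qed.

Theorem mainTheorem8 (R : realType) (n : nat) (c d : 'cV[R]_n)
  (hcd : c != d) (hc : c != 0) (hd : d != 0) (hdot : dotv c d <= 0) :
  gammacd c d <= 1 / 2 /\ (~ in_segment 0 c d -> 0 < gammacd c d).
Proof.
have a_gt0 := nrm2_gt0 hc; have b_gt0 := nrm2_gt0 hd.
have gram_ge0 : 0 <= nrm2 c * nrm2 d - dotv c d ^+ 2 by rewrite subr_ge0 cauchy_schwarz.
have den_gt0 : 0 < nrm2 (c - d) by rewrite nrm2_gt0 // subr_eq0.
rewrite /gammacd; split.
  have sqrt_gram_le : Num.sqrt (nrm2 c * nrm2 d - dotv c d ^+ 2) <= nrm2 (c - d) / 2.
    rewrite -[_ / 2]ger0_norm ?divr_ge0 ?(ltW den_gt0) // -sqrtr_sqr ler_sqrt ?sqr_ge0 //.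
    by rewrite nrm2B gram_le_quarter_sqr ?(ltW a_gt0) ?(ltW b_gt0).
  by rewrite ler_pdivrMr // mul1r [2^-1 * _]mulrC.
move=> not_seg; rewrite divr_gt0 // sqrtr_gt0 lt0r gram_ge0 andbT subr_eq0.
apply/eqP => /cauchy_schwarz_eq aligned; apply: not_seg.
apply: (@in_segment0_comb _ _ c d (- dotv c d) (nrm2 c)); [lra | lra | lra |].
by rewrite aligned scaleNr addNr.
Qed.
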